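(* Let $a_1>a_2\ge a_3\ge\cdots\ge a_n$ be real numbers in $[a,b]$, $w_1,\dots,w_n$ real weights with $w_1>0$, and $k$ a positive integer such that $\sum_{i=1}^n w_ia_i^j=0$ for all integers $0\le j<k$. Suppose at least one of the following holds: (1) the sequence $w_1,w_2,\dots,w_n$ has at most $k$ sign changes; (2) the sequence of partial sums $w_1,\ w_1+w_2,\ \dots,\ w_1+\cdots+w_n$ has at most $k-1$ sign changes; (3) the sequence whose $m$-th term ($1\le m\le n$) is $\left(\sum_{i=1}^m w_ia_i\right)-\left(\sum_{i=1}^m w_i\right)a_m$ has at most $k-2$ sign changes. Then $\sum_{i=1}^n w_if(a_i)\ge 0$ for every $k$ times differentiable $f:[a,b]\to\mathbb{R}$ with $f^{(k)}\ge 0$.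
   Context: The number of sign changes of a finite real sequence $c_1,\dots,c_N$ is the maximum integer $m$ such that there exist indices $i_1<i_2<\cdots<i_{m+1}$ with $c_{i_l}c_{i_{l+1}}<0$ for $1\le l\le m$ (zero terms are ignored). *)

From Stdlib Require Import Reals Lra Lia ZArith.
Open Scope R_scope.

Fixpoint sum1n (f : nat -> R) (n : nat) : R :=
  match n with
  | O => 0
  | S m => sum1n f m + f (S m)
  end.

Definition has_sign_changes (c : nat -> R) (N m : nat) : Prop :=
  exists idx : nat -> nat,
    (forall l, (1 <= l <= m + 1)%nat -> (1 <= idx l <= N)%nat) /\
    (forall l, (1 <= l <= m)%nat -> (idx l < idx (l + 1)%nat)%nat) /\
    (forall l, (1 <= l <= m)%nat -> c (idx l) * c (idx (l + 1)%nat) < 0).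

(* The number of sign changes (the maximum such m) is at most K (K integer,
   possibly negative, in which case the condition is unsatisfiable). *)
Definition at_most_sign_changes (c : nat -> R) (N : nat) (K : Z) : Prop :=
  forall m : nat, has_sign_changes c N m -> (Z.of_nat m <= K)%Z.

Definition Icc (a b : R) : R -> Prop := fun x => a <= x <= b.

(* f is k times differentiable on [a,b] with successive derivatives
   F 0 = f, F 1, ..., F k (derivatives taken within [a,b], i.e. one-sided
   at the endpoints). *)
Definition derivs_on (a b : R) (k : nat) (f : R -> R) (F : nat -> R -> R) : Prop :=
  (forall x, Icc a b x -> F O x = f x) /\
  (forall j x, (j < k)%nat -> Icc a b x -> D_in (F j) (F (S j)) (Icc a b) x).

(* For d = 0, 1, 2 let c be respectively the weights w_m, the partial sums
   S_m = w_1 + ... + w_m, or T_{m+1} where T_m = Σ_{i<=m} w_i x_i - S_m x_m.  Summation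
   by parts (d times) and the mean value theorem write Σ_i w_i h(x_i) as
   Σ_m c_m h^(d)(ξ_m) e_m with e_m > 0 and ξ_m in a known interval J_m (abel_rep).
   If c has s <= k - d sign changes, nodes z_1 > ... > z_s separating its sign blocks
   make ω(t) = Π_l (t - z_l) have the sign of c_m on J_m (sign_adapted).  Then either
   s + d < k, and the d-fold primitive of ω is a polynomial of degree < k whose weighted
   sum is both 0 and positive; or s + d = k, and for the interpolant P of f^(d) at the
   z_l the remainder estimate (f^(d) - P) ω >= 0, a consequence of the k-fold Rolle
   theorem, makes every term of Σ_i w_i (f - P_d)(x_i) nonnegative, P_d being a
   d-fold primitive of P (adapted_sum_nonneg).

   Two reductions finish the proof: in case (3) a crossing
   T_m T_{m+1} < 0 is removed by inserting a node of weight zero, and equal nodes are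
   merged into one. *)

From Stdlib Require Import Reals Lra Lia ZArith List Classical_Prop Wf_nat.
Import ListNotations.
Open Scope R_scope.

Lemma sum1n_S f n : sum1n f (S n) = sum1n f n + f (S n).
Proof. reflexivity. Qed.

Lemma sum1n_ext f g n :
  (forall i, (1 <= i <= n)%nat -> f i = g i) -> sum1n f n = sum1n g n.
Proof.
  induction n as [|n IH]; intros H; simpl; auto.
  rewrite IH by (intros; apply H; lia). rewrite H by lia. reflexivity.
Qed.

Lemma sum1n_plus f g n : sum1n (fun i => f i + g i) n = sum1n f n + sum1n g n.
Proof. induction n as [|n IH]; simpl; [ring|rewrite IH; ring]. Qed.

Lemma sum1n_scal c f n : sum1n (fun i => c * f i) n = c * sum1n f n.
Proof. induction n as [|n IH]; simpl; [ring|rewrite IH; ring]. Qed.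

Lemma sum1n_zero f n : (forall i, (1 <= i <= n)%nat -> f i = 0) -> sum1n f n = 0.
Proof.
  induction n as [|n IH]; intros H; simpl; [reflexivity|].
  rewrite IH by (intros; apply H; lia). rewrite H by lia. ring.
Qed.

Lemma sum1n_nonneg f n : (forall i, (1 <= i <= n)%nat -> 0 <= f i) -> 0 <= sum1n f n.
Proof.
  induction n as [|n IH]; intros H; simpl; [lra|].
  assert (0 <= f (S n)) by (apply H; lia).
  assert (0 <= sum1n f n) by (apply IH; intros; apply H; lia). lra.
Qed.

Lemma sum1n_pos f n i0 : (1 <= i0 <= n)%nat -> 0 < f i0 ->
  (forall i, (1 <= i <= n)%nat -> 0 <= f i) -> 0 < sum1n f n.
Proof.
  induction n as [|n IH]; intros Hi0 Hp H; simpl; [lia|].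
  destruct (Nat.eq_dec i0 (S n)) as [->|].
  - assert (0 <= sum1n f n) by (apply sum1n_nonneg; intros; apply H; lia). lra.
  - assert (0 < sum1n f n) by (apply IH; auto; try lia; intros; apply H; lia).
    assert (0 <= f (S n)) by (apply H; lia). lra.
Qed.

Lemma summation_by_parts (w g : nat -> R) N :
  sum1n (fun i => w i * g i) (S N) =
  sum1n (fun m => sum1n w m * (g m - g (S m))) N + sum1n w (S N) * g (S N).
Proof. induction N as [|N IH]; [simpl; ring|rewrite sum1n_S, IH; simpl; ring]. Qed.

Lemma sum1n_telescope (T : nat -> R) N :
  sum1n (fun m => T (S m) - T m) N = T (S N) - T 1%nat.
Proof. induction N as [|N IH]; [simpl; ring|rewrite sum1n_S, IH; ring]. Qed.

Definition strict_decr (z : nat -> R) (lo hi : nat) : Prop :=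
  forall l, (lo <= l)%nat -> (l < hi)%nat -> z (S l) < z l.

Lemma strict_decr_lt z lo hi l1 l2 : strict_decr z lo hi ->
  (lo <= l1)%nat -> (l1 < l2)%nat -> (l2 <= hi)%nat -> z l2 < z l1.
Proof.
  intros H H1 H12 H2. induction l2 as [|l2 IH]; [lia|].
  destruct (Nat.eq_dec l1 l2) as [->|]; [apply H; lia|].
  assert (z l2 < z l1) by (apply IH; lia).
  assert (z (S l2) < z l2) by (apply H; lia). lra.
Qed.

Lemma strict_decr_le z lo hi l1 l2 : strict_decr z lo hi ->
  (lo <= l1)%nat -> (l1 <= l2)%nat -> (l2 <= hi)%nat -> z l2 <= z l1.
Proof.
  intros. destruct (Nat.eq_dec l1 l2) as [->|]; [lra|].
  left; apply (strict_decr_lt z lo hi); auto; lia.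
Qed.

Definition deriv_chain (a b : R) (k : nat) (F : nat -> R -> R) : Prop :=
  forall j x, (j < k)%nat -> Icc a b x -> D_in (F j) (F (S j)) (Icc a b) x.

Lemma deriv_chain_minus a b k F G : deriv_chain a b k F -> deriv_chain a b k G ->
  deriv_chain a b k (fun j t => F j t - G j t).
Proof. intros HF HG j x Hj Hx. apply Dminus; auto. Qed.

Lemma deriv_chain_scal a b k F c : deriv_chain a b k F ->
  deriv_chain a b k (fun j t => c * F j t).
Proof. intros HF j x Hj Hx. apply Dmult_const; auto. Qed.

Lemma deriv_chain_le a b k m F : (m <= k)%nat -> deriv_chain a b k F -> deriv_chain a b m F.
Proof. intros Hm HF j x Hj Hx. apply HF; auto; lia. Qed.

Lemma deriv_chain_drop a b d m F : deriv_chain a b (m + d) F ->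
  deriv_chain a b m (fun j => F (j + d)%nat).
Proof. intros HF j x Hj Hx. apply HF; auto; lia. Qed.

(* Extending h from [a,b] to R by clamping keeps continuity and interior derivatives,
   which transports Stdlib's MVT (stated on all of R) to one-sided derivatives. *)
Definition clamp (a b t : R) : R := Rmax a (Rmin b t).

Lemma clamp_in a b t : a <= b -> Icc a b (clamp a b t).
Proof. intro. unfold clamp, Icc, Rmax, Rmin. repeat destruct Rle_dec; lra. Qed.

Lemma clamp_id a b t : Icc a b t -> clamp a b t = t.
Proof. unfold clamp, Icc, Rmax, Rmin. intros. repeat destruct Rle_dec; lra. Qed.

Lemma clamp_lipschitz a b t y : a <= b -> Rabs (clamp a b t - clamp a b y) <= Rabs (t - y).
Proof.
  intro. unfold clamp, Rmax, Rmin, Rabs.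
  repeat destruct Rle_dec; repeat destruct Rcase_abs; lra.
Qed.

Lemma clamp_continuous a b h : a <= b ->
  (forall x, Icc a b x -> continue_in h (Icc a b) x) ->
  forall y, continuity_pt (fun t => h (clamp a b t)) y.
Proof.
  intros Hab Hc y eps Heps.
  destruct (Hc (clamp a b y) (clamp_in a b y Hab) eps Heps) as [alp [Halp H]].
  exists alp. split; auto. intros t [_ Ht]. simpl in *. unfold R_dist in *.
  destruct (Req_dec (clamp a b t) (clamp a b y)) as [E|E].
  - rewrite E. unfold Rminus. rewrite Rplus_opp_r, Rabs_R0. lra.
  - apply H. split; [split; [apply clamp_in; auto|auto]|].
    simpl. unfold R_dist. pose proof (clamp_lipschitz a b t y Hab). lra.
Qed.

Lemma clamp_derivable a b h h' x : a < x < b -> D_in h h' (Icc a b) x ->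
  derivable_pt_lim (fun t => h (clamp a b t)) x (h' x).
Proof.
  intros Hx HD eps Heps.
  destruct (HD eps Heps) as [alp [Halp H]].
  assert (Hd : 0 < Rmin alp (Rmin (x - a) (b - x))) by (repeat apply Rmin_pos; lra).
  exists (mkposreal _ Hd). intros hh Hh0 Hhh. simpl in Hhh.
  pose proof (Rmin_l alp (Rmin (x - a) (b - x))).
  pose proof (Rmin_r alp (Rmin (x - a) (b - x))).
  pose proof (Rmin_l (x - a) (b - x)). pose proof (Rmin_r (x - a) (b - x)).
  assert (Hin : Icc a b (x + hh)) by (unfold Icc; apply Rabs_def2 in Hhh; lra).
  rewrite (clamp_id a b (x + hh) Hin), (clamp_id a b x) by (unfold Icc; lra).
  specialize (H (x + hh)). simpl in H. unfold R_dist in H.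
  replace (x + hh - x) with hh in H by ring.
  apply H. split; [split; auto; intro E; apply Hh0; lra|lra].
Qed.

Lemma MVT_Icc a b h h' p q : a <= p -> p < q -> q <= b ->
  (forall x, Icc a b x -> D_in h h' (Icc a b) x) ->
  exists c, p < c < q /\ h q - h p = h' c * (q - p).
Proof.
  intros Hp Hpq Hq HD.
  set (g := fun t => h (clamp a b t)).
  assert (Hab : a <= b) by lra.
  assert (Hd : forall c, p < c < q -> derivable_pt_lim g c (h' c))
    by (intros c Hc; apply clamp_derivable; [lra|apply HD; unfold Icc; lra]).
  assert (pr1 : forall c, p < c < q -> derivable_pt g c)
    by (intros c Hc; exists (h' c); apply Hd; auto).
  assert (pr2 : forall c, p < c < q -> derivable_pt id c)
    by (intros; apply derivable_pt_id).
  assert (Hcg : forall c, p <= c <= q -> continuity_pt g c).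
  { intros c _. apply clamp_continuous; auto. intros y Hy. eapply cont_deriv. apply HD; auto. }
  assert (Hci : forall c, p <= c <= q -> continuity_pt id c)
    by (intros; apply derivable_continuous_pt, derivable_pt_id).
  destruct (MVT g id p q pr1 pr2 Hpq Hcg Hci) as [c [P E]].
  exists c. split; auto.
  rewrite (derive_pt_eq_0 g c (h' c) (pr1 c P) (Hd c P)) in E.
  rewrite (derive_pt_eq_0 id c 1 (pr2 c P) (derivable_pt_lim_id c)) in E.
  unfold g, id in E. rewrite !clamp_id in E by (unfold Icc; lra). lra.
Qed.

Lemma finite_choice (P : nat -> R -> Prop) n :
  (forall i, (i <= n)%nat -> exists y, P i y) ->
  exists g, forall i, (i <= n)%nat -> P i (g i).
Proof.
  induction n as [|n IH]; intros H.
  - destruct (H 0%nat (le_n 0)) as [y Hy]. exists (fun _ => y).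
    intros i Hi. replace i with 0%nat by lia. auto.
  - destruct IH as [g Hg]; [intros; apply H; lia|].
    destruct (H (S n) (le_n _)) as [y Hy].
    exists (fun i => if Nat.eqb i (S n) then y else g i). intros i Hi.
    destruct (Nat.eqb_spec i (S n)) as [->|]; auto. apply Hg. lia.
Qed.

Lemma generalized_rolle a b : forall k G (y : nat -> R), deriv_chain a b k G ->
  strict_decr y 0 k -> (forall i, (i <= k)%nat -> Icc a b (y i)) ->
  (forall i, (i <= k)%nat -> G 0%nat (y i) = 0) ->
  exists xi, Icc a b xi /\ G k xi = 0.
Proof.
  induction k as [|k IH]; intros G y HC Hdec Hin Hz.
  - exists (y 0%nat). split; [apply Hin|apply Hz]; lia.
  - (* between consecutive zeros of G 0 lies a zero of G 1 *)
    destruct (finite_choice (fun i e => y (S i) < e < y i /\ G 1%nat e = 0) k) as [eta Heta].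
    { intros i Hi.
      assert (Hi1 := Hin (S i) ltac:(lia)). assert (Hi0 := Hin i ltac:(lia)).
      assert (Hlt : y (S i) < y i) by (apply Hdec; lia).
      unfold Icc in Hi1, Hi0.
      destruct (MVT_Icc a b (G 0%nat) (G 1%nat) (y (S i)) (y i)) as [c [Hc E]];
        try lra; [intros x Hx; apply HC; auto; lia|].
      exists c. split; auto. rewrite !Hz in E by lia.
      apply (Rmult_eq_reg_r (y i - y (S i))); lra. }
    destruct (IH (fun j => G (S j)) eta) as [xi [Hxi E]]; [| | |intros i Hi; apply Heta; auto|now exists xi].
    + intros j x Hj Hx. apply HC; auto. lia.
    + intros i _ Hi. destruct (Heta i ltac:(lia)) as [[A1 A2] _].
      destruct (Heta (S i) ltac:(lia)) as [[B1 B2] _]. lra.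
    + intros i Hi. destruct (Heta i Hi) as [[A1 A2] _].
      assert (Hi1 := Hin (S i) ltac:(lia)). assert (Hi0 := Hin i ltac:(lia)).
      unfold Icc in *. lra.
Qed.

(** * Polynomials as coefficient lists (constant term first) *)

Fixpoint peval (p : list R) (t : R) : R :=
  match p with nil => 0 | c :: q => c + t * peval q t end.

Fixpoint padd (p q : list R) : list R :=
  match p, q with
  | nil, _ => q
  | _, nil => p
  | c :: p', d :: q' => (c + d) :: padd p' q'
  end.

Definition pscale (al : R) (p : list R) : list R := map (fun c => al * c) p.

Definition pmul_lin (z : R) (p : list R) : list R := padd (0 :: p) (pscale (- z) p).

Fixpoint monom (m : nat) : list R := match m with O => [1] | S m' => 0 :: monom m' end.

(* Formal derivative pD and primitive pI; the auxiliary index n is the current power. *)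
Fixpoint Dh (n : nat) (p : list R) : list R :=
  match p with nil => nil | c :: q => (INR n * c) :: Dh (S n) q end.
Definition pD (p : list R) : list R := match p with nil => nil | _ :: q => Dh 1 q end.
Fixpoint Ih (n : nat) (p : list R) : list R :=
  match p with nil => nil | c :: q => (c / INR n) :: Ih (S n) q end.
Definition pI (p : list R) : list R := 0 :: Ih 1 p.

Lemma peval_padd p q t : peval (padd p q) t = peval p t + peval q t.
Proof. revert q; induction p; destruct q; simpl; try ring. rewrite IHp. ring. Qed.

Lemma length_padd p q : length (padd p q) = Nat.max (length p) (length q).
Proof. revert q; induction p; destruct q; simpl; auto. Qed.

Lemma peval_pscale al p t : peval (pscale al p) t = al * peval p t.
Proof. unfold pscale. induction p; simpl; try ring. rewrite IHp. ring. Qed.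

Lemma length_pscale al p : length (pscale al p) = length p.
Proof. apply length_map. Qed.

Lemma peval_pmul_lin z p t : peval (pmul_lin z p) t = (t - z) * peval p t.
Proof. unfold pmul_lin. rewrite peval_padd, peval_pscale. simpl. ring. Qed.

Lemma length_pmul_lin z p : (length (pmul_lin z p) <= S (length p))%nat.
Proof.
  unfold pmul_lin. rewrite length_padd, length_pscale. simpl length.
  apply Nat.max_lub; lia.
Qed.

Lemma peval_monom m t : peval (monom m) t = t ^ m.
Proof. induction m; simpl; try ring. rewrite IHm. ring. Qed.

Lemma length_monom m : length (monom m) = S m.
Proof. induction m; simpl; auto. Qed.

Lemma length_pD p : length (pD p) = pred (length p).
Proof.
  destruct p as [|c q]; simpl; auto. generalize 1%nat.
  induction q; simpl; auto.
Qed.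

Lemma length_pI p : length (pI p) = S (length p).
Proof. unfold pI. simpl. f_equal. generalize 1%nat. induction p; simpl; auto. Qed.


Lemma Dh_Ih n p : (1 <= n)%nat -> Dh n (Ih n p) = p.
Proof.
  revert n; induction p as [|c q IH]; intros n Hn; simpl; auto.
  rewrite IH by lia. f_equal. field. apply not_0_INR. lia.
Qed.

Lemma pD_pI p : pD (pI p) = p.
Proof. apply Dh_Ih. lia. Qed.

Lemma iter_pD_pI d p : Nat.iter d pD (Nat.iter d pI p) = p.
Proof.
  induction d as [|d IH]; auto.
  change (Nat.iter (S d) pI p) with (pI (Nat.iter d pI p)).
  rewrite Nat.iter_succ_r, pD_pI. exact IH.
Qed.

Lemma length_iter_pI d p : length (Nat.iter d pI p) = (d + length p)%nat.
Proof.
  induction d as [|d IH]; auto.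
  change (Nat.iter (S d) pI p) with (pI (Nat.iter d pI p)). rewrite length_pI, IH. lia.
Qed.

Lemma iter_pD_nil : forall j p, (length p <= j)%nat -> Nat.iter j pD p = nil.
Proof.
  induction j as [|j IH]; intros p Hp.
  - destruct p; simpl in *; auto; lia.
  - rewrite Nat.iter_succ_r. apply IH. rewrite length_pD. lia.
Qed.

Lemma derivable_pt_lim_eq f g x l l' : derivable_pt_lim f x l -> l = l' ->
  (forall z, f z = g z) -> derivable_pt_lim g x l'.
Proof. intros H -> E. eapply derivable_pt_lim_ext; eauto. Qed.

Lemma Dh_derivable : forall p n t, (1 <= n)%nat ->
  derivable_pt_lim (fun s => s ^ n * peval p s) t (t ^ (n - 1) * peval (Dh n p) t).
Proof.
  induction p as [|c q IH]; intros n t Hn; simpl.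
  - eapply derivable_pt_lim_eq; [apply derivable_pt_lim_const with (a := 0)|ring|].
    intros; unfold fct_cte; ring.
  - eapply derivable_pt_lim_eq.
    + apply derivable_pt_lim_plus.
      * apply derivable_pt_lim_scal with (a := c). apply (derivable_pt_lim_pow t n).
      * apply (IH (S n) t). lia.
    + replace (Init.Nat.pred n) with (n - 1)%nat by lia.
      replace (S n - 1)%nat with (S (n - 1)) by lia. simpl. ring.
    + intro z. unfold mult_real_fct, plus_fct. simpl. ring.
Qed.

Lemma pD_derivable p t : derivable_pt_lim (peval p) t (peval (pD p) t).
Proof.
  destruct p as [|c q]; simpl.
  - eapply derivable_pt_lim_eq; [apply derivable_pt_lim_const with (a := 0)|auto|].
    intros; reflexivity.
  - eapply derivable_pt_lim_eq.
    + apply derivable_pt_lim_plus; [apply derivable_pt_lim_const with (a := c)|].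
      apply (Dh_derivable q 1 t). lia.
    + simpl. ring.
    + intro z. unfold plus_fct, fct_cte. simpl. ring.
Qed.

Lemma derivable_D_in f f' x D : derivable_pt_lim f x (f' x) -> D_in f f' D x.
Proof.
  intro H. apply derivable_pt_lim_D_in in H. eapply limit1_imp; [|exact H].
  intros y [_ Hy]. split; [constructor|auto].
Qed.

Lemma poly_chain a b k p : deriv_chain a b k (fun j t => peval (Nat.iter j pD p) t).
Proof. intros j x _ _. apply derivable_D_in. simpl. apply pD_derivable. Qed.

(* pc k j = k (k-1) ... (k-j+1), so that t |-> pc k j * t^(k-j) is the j-th derivative of t^k. *)
Fixpoint pc (k j : nat) : R := match j with O => 1 | S j' => pc k j' * INR (k - j') end.

Lemma pc_pos k j : (j <= k)%nat -> 0 < pc k j.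
Proof.
  induction j; intros; simpl; [lra|].
  apply Rmult_lt_0_compat; [apply IHj; lia|apply lt_0_INR; lia].
Qed.

Lemma power_chain a b k : deriv_chain a b k (fun j t => pc k j * t ^ (k - j)).
Proof.
  intros j x _ _. apply derivable_D_in. simpl.
  eapply derivable_pt_lim_eq;
    [apply derivable_pt_lim_scal with (a := pc k j); apply derivable_pt_lim_pow| |reflexivity].
  replace (Init.Nat.pred (k - j)) with (k - S j)%nat by lia. ring.
Qed.

Definition moments_vanish (w x : nat -> R) (n k : nat) : Prop :=
  forall j, (j < k)%nat -> sum1n (fun i => w i * x i ^ j) n = 0.

Lemma moments_poly w x n k : moments_vanish w x n k ->
  forall p, (length p <= k)%nat -> sum1n (fun i => w i * peval p (x i)) n = 0.
Proof.
  intros Hm.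
  assert (G : forall p j, (length p + j <= k)%nat ->
            sum1n (fun i => w i * x i ^ j * peval p (x i)) n = 0).
  { induction p as [|c p IH]; intros j Hj; simpl.
    - apply sum1n_zero. intros; ring.
    - rewrite (sum1n_ext _ (fun i => c * (w i * x i ^ j) + w i * x i ^ (S j) * peval p (x i)))
        by (intros; simpl; ring).
      rewrite sum1n_plus, sum1n_scal, Hm, IH; simpl in Hj; [ring|lia|lia]. }
  intros p Hp. rewrite <- (G p 0%nat) by lia. apply sum1n_ext. intros; simpl; ring.
Qed.

(** * The node polynomial ω(t) = (t - z_1) ... (t - z_s) and interpolation *)

Fixpoint node_poly (z : nat -> R) (s : nat) (t : R) : R :=
  match s with O => 1 | S s' => node_poly z s' t * (t - z (S s')) end.

Lemma node_poly_root z s l : (1 <= l <= s)%nat -> node_poly z s (z l) = 0.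
Proof.
  induction s; intros; simpl; [lia|].
  destruct (Nat.eq_dec l (S s)) as [->|]; [ring|rewrite IHs by lia; ring].
Qed.

Lemma node_poly_nonzero z s t : (forall l, (1 <= l <= s)%nat -> t <> z l) ->
  node_poly z s t <> 0.
Proof.
  induction s; intros H; simpl; [lra|].
  apply Rmult_integral_contrapositive. split; [apply IHs; intros; apply H; lia|].
  assert (t <> z (S s)) by (apply H; lia). lra.
Qed.

Lemma node_poly_monic z : forall s, exists r, (length r <= s)%nat /\
  forall t, node_poly z s t = t ^ s + peval r t.
Proof.
  induction s as [|s [r [Hl Hr]]].
  - exists nil. split; [simpl; lia|intros; simpl; ring].
  - exists (padd (pscale (- z (S s)) (monom s)) (pmul_lin (z (S s)) r)). split.
    + rewrite length_padd, length_pscale, length_monom.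
      pose proof (length_pmul_lin (z (S s)) r). apply Nat.max_lub; lia.
    + intro t. simpl. rewrite peval_padd, peval_pscale, peval_pmul_lin, peval_monom, Hr. ring.
Qed.

Lemma node_poly_coeffs z s : exists q, (length q <= S s)%nat /\
  forall t, peval q t = node_poly z s t.
Proof.
  destruct (node_poly_monic z s) as [r [Hl Hr]]. exists (padd (monom s) r). split.
  - rewrite length_padd, length_monom. apply Nat.max_lub; lia.
  - intro. rewrite peval_padd, peval_monom, Hr. auto.
Qed.

Lemma node_poly_sign z : forall s j t, strict_decr z 1 s -> (j <= s)%nat ->
  ((1 <= j)%nat -> t < z j) -> ((j < s)%nat -> z (S j) < t) ->
  0 < (-1) ^ j * node_poly z s t.
Proof.
  induction s as [|s IH]; intros j t Hz Hj H1 H2.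
  - replace j with 0%nat by lia. simpl. lra.
  - simpl node_poly. destruct (Nat.eq_dec j (S s)) as [->|Hjs].
    + assert (Ht : t < z (S s)) by (apply H1; lia).
      assert (0 < (-1) ^ s * node_poly z s t).
      { apply IH; [intros l A B; apply Hz; lia|lia| |intros; lia].
        intros. assert (z (S s) < z s) by (apply Hz; lia). lra. }
      simpl. replace (-1 * (-1) ^ s * (node_poly z s t * (t - z (S s)))) with
        (((-1) ^ s * node_poly z s t) * (z (S s) - t)) by ring.
      apply Rmult_lt_0_compat; lra.
    + assert (Ht : z (S s) < t).
      { destruct (Nat.eq_dec j s) as [->|]; [apply H2; lia|].
        assert (z (S s) < z (S j)) by (apply (strict_decr_lt z 1 (S s)); auto; lia).
        assert (z (S j) < t) by (apply H2; lia). lra. }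
      assert (0 < (-1) ^ j * node_poly z s t).
      { apply IH; try (intros l A B; apply Hz; lia); try lia; auto;
          intros; apply H2; lia. }
      replace ((-1) ^ j * (node_poly z s t * (t - z (S s)))) with
        (((-1) ^ j * node_poly z s t) * (t - z (S s))) by ring.
      apply Rmult_lt_0_compat; lra.
Qed.

(* Interpolation at s distinct nodes (Newton's construction). *)
Lemma interpolation z : forall s, strict_decr z 1 s -> forall v : nat -> R,
  exists P, (length P <= s)%nat /\ forall l, (1 <= l <= s)%nat -> peval P (z l) = v l.
Proof.
  induction s as [|s IH]; intros Hz v.
  - exists nil. split; [simpl; lia|intros; lia].
  - destruct (IH (fun l A B => Hz l A ltac:(lia)) v) as [P [HP HPv]].
    destruct (node_poly_coeffs z s) as [q [Hq Hqe]].
    assert (Hnz : node_poly z s (z (S s)) <> 0).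
    { apply node_poly_nonzero. intros l Hl.
      assert (z (S s) < z l) by (apply (strict_decr_lt z 1 (S s)); auto; lia). lra. }
    set (al := (v (S s) - peval P (z (S s))) / node_poly z s (z (S s))).
    exists (padd P (pscale al q)). split.
    + rewrite length_padd, length_pscale. apply Nat.max_lub; lia.
    + intros l Hl. rewrite peval_padd, peval_pscale, Hqe.
      destruct (Nat.eq_dec l (S s)) as [->|].
      * unfold al. field. auto.
      * rewrite node_poly_root, HPv by lia. ring.
Qed.

Lemma insert_point z t : forall k, strict_decr z 1 k ->
  (forall l, (1 <= l <= k)%nat -> t <> z l) ->
  exists y, strict_decr y 0 k /\
    forall i, (i <= k)%nat -> y i = t \/ exists l, (1 <= l <= k)%nat /\ y i = z l.
Proof.
  induction k as [|k IH]; intros Hz Ht.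
  - exists (fun _ => t). split; [intros l _ H; lia|intros; auto].
  - destruct (Rlt_dec (z (S k)) t) as [Hlt|Hge].
    + destruct IH as [y [Hy Hym]]; [intros l H1 H2; apply Hz; lia|intros; apply Ht; lia|].
      exists (fun i => if Nat.eqb i (S k) then z (S k) else y i). split.
      * intros l H1 H2.
        destruct (Nat.eqb_spec (S l) (S k)); destruct (Nat.eqb_spec l (S k)); try lia.
        -- assert (l = k) by lia. subst l.
           destruct (Hym k (le_n _)) as [E|[l [Hl E]]]; rewrite E; auto.
           apply (strict_decr_lt z 1 (S k)); auto; lia.
        -- apply Hy; lia.
      * intros i Hi. destruct (Nat.eqb_spec i (S k)).
        -- right. exists (S k). split; auto; lia.
        -- destruct (Hym i ltac:(lia)) as [E|[l [Hl E]]]; auto.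
           right. exists l. split; auto; lia.
    + assert (t <> z (S k)) by (apply Ht; lia).
      exists (fun i => if Nat.eqb i (S k) then t else z (S i)). split.
      * intros l H1 H2.
        destruct (Nat.eqb_spec (S l) (S k)); destruct (Nat.eqb_spec l (S k)); try lia.
        -- assert (l = k) by lia. subst l. lra.
        -- apply Hz; lia.
      * intros i Hi. destruct (Nat.eqb_spec i (S k)); auto.
        right. exists (S i). split; auto; lia.
Qed.

(* Interpolation remainder: if F k >= 0 on [a,b] and P interpolates F 0 at the nodes
   z_1 > ... > z_k, then F 0 - P has the sign of ω on [a,b]
   (classically F 0 t - P t = F k ξ / k! * ω t). *)
Lemma interpolation_remainder_sign a b k F z :
  deriv_chain a b k F -> (forall t, Icc a b t -> F k t >= 0) ->
  strict_decr z 1 k -> (forall l, (1 <= l <= k)%nat -> Icc a b (z l)) ->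
  exists P, (length P <= k)%nat /\
    forall t, Icc a b t -> (F 0%nat t - peval P t) * node_poly z k t >= 0.
Proof.
  intros HF Hk Hz Hzi.
  destruct (interpolation z k Hz (fun l => F 0%nat (z l))) as [P [HPl HPv]].
  exists P. split; auto. intros t Ht.
  destruct (classic (exists l, (1 <= l <= k)%nat /\ t = z l)) as [[l [Hl ->]]|Hn].
  { rewrite HPv by auto. unfold Rminus. rewrite Rplus_opp_r. lra. }
  assert (Htz : forall l, (1 <= l <= k)%nat -> t <> z l) by (intros l Hl E; apply Hn; eauto).
  pose proof (node_poly_nonzero z k t Htz) as Hw.
  (* E makes G 0 = F 0 - P - E ω vanish at t and at all nodes *)
  set (E := (F 0%nat t - peval P t) / node_poly z k t).
  destruct (node_poly_monic z k) as [r [Hr Hre]].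
  set (Q := padd P (pscale E r)).
  set (G := fun j s => (F j s - E * (pc k j * s ^ (k - j))) - peval (Nat.iter j pD Q) s).
  assert (HG : deriv_chain a b k G).
  { apply deriv_chain_minus; [apply deriv_chain_minus; auto|apply poly_chain].
    apply deriv_chain_scal, power_chain. }
  assert (HG0 : forall s, G 0%nat s = F 0%nat s - peval P s - E * node_poly z k s).
  { intro s. unfold G, Q. simpl Nat.iter. rewrite peval_padd, peval_pscale, Hre.
    replace (k - 0)%nat with k by lia. simpl. ring. }
  destruct (insert_point z t k Hz Htz) as [y [Hy Hym]].
  destruct (generalized_rolle a b k G y HG Hy) as [xi [Hxi Hxi0]].
  - intros i Hi. destruct (Hym i Hi) as [->|[l [Hl ->]]]; auto.
  - intros i Hi. rewrite HG0. destruct (Hym i Hi) as [->|[l [Hl ->]]].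
    + unfold E. field. auto.
    + rewrite node_poly_root, HPv by auto. ring.
  - (* G k = F k - E k!, hence E >= 0, while F 0 t - P t = E ω t *)
    unfold G in Hxi0. rewrite iter_pD_nil in Hxi0.
    2: { unfold Q. rewrite length_padd, length_pscale. apply Nat.max_lub; lia. }
    replace (k - k)%nat with 0%nat in Hxi0 by lia. simpl in Hxi0.
    assert (Hpc := pc_pos k k (le_n _)).
    assert (HE0 : 0 <= E).
    { specialize (Hk xi Hxi). apply (Rmult_le_reg_r (pc k k)); auto. lra. }
    replace (F 0%nat t - peval P t) with (E * node_poly z k t) by (unfold E; field; auto).
    replace (E * node_poly z k t * node_poly z k t) with
      (E * (node_poly z k t * node_poly z k t)) by ring.
    apply Rle_ge, Rmult_le_pos; auto. apply Rle_0_sqr.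
Qed.

(** * Sign changes *)

Lemma pow_m1_sq j : (-1) ^ j * (-1) ^ j = 1.
Proof. rewrite <- Rpow_mult_distr. replace (-1 * -1) with 1 by ring. apply pow1. Qed.

Lemma sign_transfer A u B C : u * u = 1 -> A * u >= 0 -> 0 < u * B -> B * C >= 0 ->
  A * C >= 0.
Proof.
  intros Hu H1 H2 H3.
  assert (H : 0 <= (A * u) * (u * B) * (B * C)) by (apply Rmult_le_pos; [apply Rmult_le_pos|]; lra).
  replace ((A * u) * (u * B) * (B * C)) with ((A * C) * (B * B) * (u * u)) in H by ring.
  rewrite Hu, Rmult_1_r in H.
  assert (HB : 0 < B * B) by (assert (B <> 0) by (intro E; subst; lra); nra).
  nra.
Qed.

Lemma sign_changes_transfer (c c' : nat -> R) N N' phi K : (1 <= N)%nat ->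
  (forall i, (1 <= i <= N')%nat -> c' i <> 0 ->
     (1 <= phi i <= N)%nat /\ c (phi i) * c' i > 0) ->
  (forall i j, (1 <= i)%nat -> (i < j)%nat -> (j <= N')%nat -> c' i * c' j < 0 ->
     (phi i < phi j)%nat) ->
  at_most_sign_changes c N K -> at_most_sign_changes c' N' K.
Proof.
  intros HN Hphi Hmono HK m [idx [H1 [H2 H3]]].
  destruct m as [|m].
  { apply HK. exists (fun _ => 1%nat). repeat split; intros; lia. }
  apply HK. exists (fun l => phi (idx l)).
  assert (Hnz : forall l, (1 <= l <= S m + 1)%nat -> c' (idx l) <> 0).
  { intros l Hl E. destruct (Nat.eq_dec l (S m + 1)) as [->|].
    - specialize (H3 (S m) ltac:(lia)). rewrite E in H3. lra.
    - specialize (H3 l ltac:(lia)). rewrite E in H3. lra. }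
  split; [|split].
  - intros l Hl. apply (Hphi (idx l)); auto.
  - intros l Hl. apply Hmono; [apply H1; lia|apply H2; lia|apply H1; lia|apply H3; lia].
  - intros l Hl.
    destruct (Hphi (idx l)) as [_ A]; [apply H1; lia|apply Hnz; lia|].
    destruct (Hphi (idx (l + 1)%nat)) as [_ B]; [apply H1; lia|apply Hnz; lia|].
    specialize (H3 l Hl).
    assert (0 < (c (phi (idx l)) * c' (idx l)) * (c (phi (idx (l + 1)%nat)) * c' (idx (l + 1)%nat)))
      by (apply Rmult_lt_0_compat; lra).
    nra.
Qed.

Lemma sign_changes_bound_nonneg c N K : (1 <= N)%nat ->
  at_most_sign_changes c N K -> (0 <= K)%Z.
Proof.
  intros HN HK. apply (HK 0%nat). exists (fun _ => 1%nat). repeat split; intros; lia.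
Qed.

Lemma sign_changes_ext c c' N K : (forall i, c i = c' i) ->
  at_most_sign_changes c N K -> at_most_sign_changes c' N K.
Proof.
  intros E H m [idx [H1 [H2 H3]]]. apply H. exists idx. split; [auto|split; auto].
  intros l Hl. rewrite !E. auto.
Qed.

Lemma sign_changes_prefix c N N2 K : (1 <= N)%nat -> (N <= N2)%nat ->
  at_most_sign_changes c N2 K -> at_most_sign_changes c N K.
Proof.
  intros H1 H2. apply sign_changes_transfer with (phi := fun i => i); [lia| |intros; lia].
  intros i Hi Hn. split; [lia|]. assert (0 < c i * c i) by nra. lra.
Qed.

Record sign_blocks (c : nat -> R) (N s : nat) (p : nat -> nat) : Prop := {
  blocks_first : p 0%nat = 1%nat;
  blocks_last : p (S s) = S N;
  blocks_incr : forall j, (j <= s)%nat -> (p j < p (S j))%nat;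
  blocks_start : forall j, (j <= s)%nat -> c (p j) * (-1) ^ j > 0;
  blocks_sign : forall j i, (j <= s)%nat -> (p j <= i < p (S j))%nat -> c i * (-1) ^ j >= 0 }.

Lemma blocks_mono c N s p : sign_blocks c N s p ->
  forall j1 j2, (j1 <= j2 <= S s)%nat -> (p j1 <= p j2)%nat.
Proof.
  intros B j1 j2 H. induction j2 as [|j2 IH]; [replace j1 with 0%nat by lia; lia|].
  destruct (Nat.eq_dec j1 (S j2)) as [->|]; [lia|].
  assert (p j2 < p (S j2))%nat by (apply (blocks_incr _ _ _ _ B); lia).
  assert (p j1 <= p j2)%nat by (apply IH; lia). lia.
Qed.

Lemma blocks_range c N s p : sign_blocks c N s p ->
  forall l, (l <= s)%nat -> (1 <= p l <= N)%nat.
Proof.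
  intros B l Hl. pose proof (blocks_mono c N s p B 0 l ltac:(lia)).
  pose proof (blocks_mono c N s p B l s ltac:(lia)).
  pose proof (blocks_incr _ _ _ _ B s (le_n s)).
  rewrite (blocks_first _ _ _ _ B) in *. rewrite (blocks_last _ _ _ _ B) in *. lia.
Qed.

Lemma blocks_member_range c N s p : sign_blocks c N s p ->
  forall j m, (j <= s)%nat -> (p j <= m < p (S j))%nat -> (1 <= m <= N)%nat.
Proof.
  intros B j m Hj Hm. pose proof (blocks_range c N s p B j Hj).
  pose proof (blocks_mono c N s p B (S j) (S s) ltac:(lia)).
  rewrite (blocks_last _ _ _ _ B) in *. lia.
Qed.

Lemma blocks_start_ge2 c N s p : sign_blocks c N s p ->
  forall l, (1 <= l <= S s)%nat -> (2 <= p l)%nat.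
Proof.
  intros B l Hl. pose proof (blocks_mono c N s p B 1 l ltac:(lia)).
  pose proof (blocks_incr _ _ _ _ B 0 ltac:(lia)). rewrite (blocks_first _ _ _ _ B) in *. lia.
Qed.

Lemma blocks_find c N s p : sign_blocks c N s p ->
  forall i, (1 <= i <= N)%nat -> exists j, (j <= s)%nat /\ (p j <= i < p (S j))%nat.
Proof.
  intros B i Hi.
  assert (G : forall s', (s' <= s)%nat -> (i < p (S s'))%nat ->
            exists j, (j <= s')%nat /\ (p j <= i < p (S j))%nat).
  { induction s' as [|s' IH]; intros Hs Hlt.
    - exists 0%nat. rewrite (blocks_first _ _ _ _ B). lia.
    - destruct (Nat.lt_ge_cases i (p (S s'))).
      + destruct IH as [j [Hj Hj2]]; [lia|auto|]. exists j. split; [lia|auto].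
      + exists (S s'). split; auto. }
  destruct (G s (le_n s)) as [j Hj]; [rewrite (blocks_last _ _ _ _ B); lia|eauto].
Qed.

Lemma blocks_sign_changes c N s p : sign_blocks c N s p -> has_sign_changes c N s.
Proof.
  intros B. exists (fun l => p (l - 1)%nat). split; [|split].
  - intros l Hl. apply (blocks_range c N s p B). lia.
  - intros l Hl. replace (l + 1 - 1)%nat with (S (l - 1)) by lia.
    apply (blocks_incr _ _ _ _ B). lia.
  - intros l Hl. replace (l + 1 - 1)%nat with (S (l - 1)) by lia.
    pose proof (blocks_start _ _ _ _ B (l - 1) ltac:(lia)).
    pose proof (blocks_start _ _ _ _ B (S (l - 1)) ltac:(lia)).
    pose proof (pow_m1_sq (l - 1)). simpl in *. nra.
Qed.

Lemma blocks_snoc c N s p : sign_blocks c N s p ->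
  (c (S N) * (-1) ^ s >= 0 /\
     sign_blocks c (S N) s (fun j => if Nat.eqb j (S s) then S (S N) else p j)) \/
  (c (S N) * (-1) ^ s < 0 /\
     sign_blocks c (S N) (S s) (fun j => if Nat.eqb j (S (S s)) then S (S N) else p j)).
Proof.
  intros [H0 HS Hinc Hst Hsg].
  destruct (Rlt_dec (c (S N) * (-1) ^ s) 0) as [Hlt|Hge]; [right|left]; (split; [lra|]).
  -
    split; [exact H0|now rewrite Nat.eqb_refl| | |].
    + intros j Hj. destruct (Nat.eqb_spec (S j) (S (S s))), (Nat.eqb_spec j (S (S s))); try lia.
      * assert (j = S s) by lia. subst j. lia.
      * apply Hinc; lia.
    + intros j Hj. destruct (Nat.eqb_spec j (S (S s))); try lia.
      destruct (Nat.eq_dec j (S s)) as [->|]; [rewrite HS; simpl; lra|apply Hst; lia].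
    + intros j i Hj Hi. destruct (Nat.eqb_spec j (S (S s))); try lia.
      destruct (Nat.eqb_spec (S j) (S (S s))).
      * assert (j = S s) by lia. subst j. rewrite HS in Hi. replace i with (S N) by lia.
        simpl. lra.
      * apply Hsg; lia.
  -
    split; [exact H0|now rewrite Nat.eqb_refl| | |].
    + intros j Hj. destruct (Nat.eqb_spec (S j) (S s)), (Nat.eqb_spec j (S s)); try lia.
      * assert (j = s) by lia. subst j. assert (p s < p (S s))%nat by (apply Hinc; lia). lia.
      * apply Hinc; lia.
    + intros j Hj. destruct (Nat.eqb_spec j (S s)); try lia. apply Hst; auto.
    + intros j i Hj Hi. destruct (Nat.eqb_spec j (S s)); try lia.
      destruct (Nat.eqb_spec (S j) (S s)).
      * assert (j = s) by lia. subst j.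
        destruct (Nat.eq_dec i (S N)) as [->|]; [lra|apply Hsg; lia].
      * apply Hsg; lia.
Qed.

Lemma sign_blocks_exist c N : (1 <= N)%nat -> c 1%nat > 0 ->
  exists s p, sign_blocks c N s p.
Proof.
  intros HN Hc1. induction N as [|N IH]; [lia|].
  destruct N as [|N].
  - exists 0%nat, (fun j => if Nat.eqb j 0 then 1%nat else 2%nat).
    split; simpl; auto; intros j; [| |intros i]; intros Hj; replace j with 0%nat by lia;
      simpl; [lia|lra|intros; replace i with 1%nat by lia; lra].
  - destruct IH as [s [p B]]; [lia|].
    destruct (blocks_snoc c (S N) s p B) as [[_ B']|[_ B']]; eauto.
Qed.

Lemma sign_blocks_bounded c N K : (1 <= N)%nat -> c 1%nat > 0 ->
  at_most_sign_changes c N K -> exists s p, (Z.of_nat s <= K)%Z /\ sign_blocks c N s p.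
Proof.
  intros HN Hc1 HK. destruct (sign_blocks_exist c N HN Hc1) as [s [p B]].
  exists s, p. split; auto. apply HK, (blocks_sign_changes c N s p B).
Qed.

Lemma blocks_zero_before c N s p : sign_blocks c N s p ->
  (forall m, (1 <= m < N)%nat -> c m * c (S m) >= 0) ->
  forall l, (1 <= l <= s)%nat -> c (p l - 1)%nat = 0.
Proof.
  intros B Hno l Hl.
  pose proof (blocks_range c N s p B) as Hr.
  assert (Hpl : (p (l - 1)%nat < p l)%nat)
    by (replace l with (S (l - 1)) at 2 by lia; apply (blocks_incr _ _ _ _ B); lia).
  assert (A : c (p l - 1)%nat * (-1) ^ (l - 1) >= 0).
  { apply (blocks_sign _ _ _ _ B); [lia|]. replace (S (l - 1)) with l by lia. lia. }
  assert (Bs : c (p l) * (-1) ^ (S (l - 1)) > 0)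
    by (replace (S (l - 1)) with l by lia; apply (blocks_start _ _ _ _ B); lia).
  assert (C : c (p l - 1)%nat * c (p l) >= 0).
  { pose proof (Hr (l - 1)%nat ltac:(lia)). pose proof (Hr l ltac:(lia)).
    replace (p l) with (S (p l - 1)) at 2 by lia. apply Hno. lia. }
  set (u := (-1) ^ (l - 1)) in *. simpl in Bs. fold u in Bs.
  assert (Hu : u * u = 1) by apply pow_m1_sq.
  assert (HB : c (p l) <> 0) by (intro E; rewrite E in Bs; lra).
  assert (0 <= (c (p l - 1)%nat * u) * (c (p l) * (-1 * u))) by (apply Rmult_le_pos; lra).
  replace ((c (p l - 1)%nat * u) * (c (p l) * (-1 * u))) with
    (- (c (p l - 1)%nat * c (p l)) * (u * u)) in H by ring.
  rewrite Hu in H.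
  apply (Rmult_eq_reg_r (c (p l))); [|auto]. lra.
Qed.

(** * The generic positivity argument *)

Definition abel_rep (a b : R) (d n N : nat) (w x c : nat -> R) (J : nat -> R -> Prop) : Prop :=
  forall H, deriv_chain a b d H ->
  exists L : nat -> R,
    sum1n (fun i => w i * H 0%nat (x i)) n = sum1n (fun m => c m * L m) N /\
    forall m, (1 <= m <= N)%nat -> exists xi e, J m xi /\ 0 < e /\ L m = H d xi * e.

Definition sign_adapted (z : nat -> R) (s N : nat) (c : nat -> R) (J : nat -> R -> Prop) : Prop :=
  forall m, (1 <= m <= N)%nat -> c m = 0 \/
    exists j, c m * (-1) ^ j >= 0 /\ forall t, J m t -> 0 < (-1) ^ j * node_poly z s t.

Lemma blocks_adapted c N s p z J : sign_blocks c N s p -> strict_decr z 1 s ->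
  (forall j m t, (j <= s)%nat -> (p j <= m < p (S j))%nat -> c m <> 0 -> J m t ->
     ((1 <= j)%nat -> t < z j) /\ ((j < s)%nat -> z (S j) < t)) ->
  sign_adapted z s N c J.
Proof.
  intros B Hz Hsep m Hm.
  destruct (Req_dec (c m) 0) as [|Hc]; [now left|right].
  destruct (blocks_find c N s p B m Hm) as [j [Hj Hjm]].
  exists j. split; [apply (blocks_sign _ _ _ _ B); auto|].
  intros t Ht. destruct (Hsep j m t Hj Hjm Hc Ht). apply node_poly_sign; auto.
Qed.

Lemma adapted_term_sign z s N c J m xi C : sign_adapted z s N c J ->
  (1 <= m <= N)%nat -> J m xi -> node_poly z s xi * C >= 0 -> c m * C >= 0.
Proof.
  intros Had Hm Hxi HC. destruct (Had m Hm) as [->|[j [A1 A2]]]; [lra|].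
  apply (sign_transfer _ ((-1) ^ j) (node_poly z s xi)); auto using pow_m1_sq.
Qed.

Lemma adapted_first_pos z s N c J xi : sign_adapted z s N c J ->
  (1 <= N)%nat -> c 1%nat > 0 -> J 1%nat xi -> node_poly z s xi > 0.
Proof.
  intros Had HN Hc1 Hxi.
  assert (Hnz : node_poly z s xi <> 0).
  { destruct (Had 1%nat ltac:(lia)) as [|[j [_ A2]]]; [lra|].
    specialize (A2 xi Hxi). intro E. rewrite E in A2. lra. }
  assert (c 1%nat * node_poly z s xi >= 0)
    by (apply (adapted_term_sign z s N c J 1 xi); auto; try lia; apply Rle_ge, Rle_0_sqr).
  destruct (Rle_dec (node_poly z s xi) 0); [|lra].
  assert (c 1%nat * node_poly z s xi < 0) by (apply Rmult_pos_neg; lra). lra.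
Qed.

Lemma adapted_rep_nonneg a b d n N w x c J z s H :
  abel_rep a b d n N w x c J -> (forall m t, (1 <= m <= N)%nat -> J m t -> Icc a b t) ->
  sign_adapted z s N c J -> deriv_chain a b d H ->
  (forall t, Icc a b t -> node_poly z s t * H d t >= 0) ->
  sum1n (fun i => w i * H 0%nat (x i)) n >= 0.
Proof.
  intros Hrep HJ Had HH Hsg.
  destruct (Hrep H HH) as [L [-> HL]]. apply Rle_ge, sum1n_nonneg. intros m Hm.
  destruct (HL m Hm) as [xi [e [Hxi [He ->]]]].
  assert (c m * H d xi >= 0) by (apply (adapted_term_sign z s N c J m xi); eauto).
  rewrite <- Rmult_assoc. apply Rmult_le_pos; lra.
Qed.

Lemma adapted_rep_pos a b d n N w x c J z s H :
  abel_rep a b d n N w x c J -> sign_adapted z s N c J -> (1 <= N)%nat -> c 1%nat > 0 ->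
  deriv_chain a b d H -> (forall t, H d t = node_poly z s t) ->
  sum1n (fun i => w i * H 0%nat (x i)) n > 0.
Proof.
  intros Hrep Had HN Hc1 HH Hd.
  destruct (Hrep H HH) as [L [-> HL]]. apply (sum1n_pos _ _ 1%nat); [lia| |].
  - destruct (HL 1%nat ltac:(lia)) as [xi [e [Hxi [He ->]]]]. rewrite Hd.
    pose proof (adapted_first_pos z s N c J xi Had HN Hc1 Hxi).
    apply Rmult_lt_0_compat; [lra|apply Rmult_lt_0_compat; lra].
  - intros m Hm. destruct (HL m Hm) as [xi [e [Hxi [He ->]]]]. rewrite Hd.
    assert (c m * node_poly z s xi >= 0)
      by (apply (adapted_term_sign z s N c J m xi); auto; apply Rle_ge, Rle_0_sqr).
    rewrite <- Rmult_assoc. apply Rmult_le_pos; lra.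
Qed.

Lemma adapted_sum_nonneg a b n k d N w x c J z s F :
  (s + d <= k)%nat -> (1 <= N)%nat -> c 1%nat > 0 -> moments_vanish w x n k ->
  abel_rep a b d n N w x c J -> (forall m t, (1 <= m <= N)%nat -> J m t -> Icc a b t) ->
  strict_decr z 1 s -> (forall l, (1 <= l <= s)%nat -> Icc a b (z l)) ->
  sign_adapted z s N c J ->
  deriv_chain a b k F -> (forall t, Icc a b t -> F k t >= 0) ->
  sum1n (fun i => w i * F 0%nat (x i)) n >= 0.
Proof.
  intros Hsd HN Hc1 Hm Hrep HJ Hz Hzi Had HF HFk.
  destruct (Nat.lt_ge_cases (s + d) k) as [Hlt|Hge].
  - (* the d-fold primitive Q of ω has degree < k: Σ w_i Q(x_i) is both 0 and > 0 *)
    exfalso.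
    destruct (node_poly_coeffs z s) as [q [Hq Hqe]].
    set (Q := Nat.iter d pI q).
    assert (Hzero : sum1n (fun i => w i * peval Q (x i)) n = 0)
      by (apply (moments_poly w x n k Hm); unfold Q; rewrite length_iter_pI; lia).
    assert (Hpos : sum1n (fun i => w i * peval (Nat.iter 0 pD Q) (x i)) n > 0).
    { apply (adapted_rep_pos a b d n N w x c J z s (fun j t => peval (Nat.iter j pD Q) t));
        auto using poly_chain.
      intro t. unfold Q. rewrite iter_pD_pI. apply Hqe. }
    simpl in Hpos. lra.
  - (* s + d = k: subtract the d-fold primitive Q of the interpolant P of F d *)
    assert (Hk : (s + d)%nat = k) by lia.
    destruct (interpolation_remainder_sign a b s (fun j => F (j + d)%nat) z)
      as [P [HPl HPs]]; auto.
    { apply deriv_chain_drop. rewrite Hk. auto. }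
    { rewrite Hk. auto. }
    set (Q := Nat.iter d pI P).
    set (H := fun j t => F j t - peval (Nat.iter j pD Q) t).
    rewrite (sum1n_ext _ (fun i => w i * H 0%nat (x i) + w i * peval Q (x i)))
      by (intros; unfold H; simpl; ring).
    rewrite sum1n_plus, (moments_poly w x n k Hm Q), Rplus_0_r
      by (unfold Q; rewrite length_iter_pI; lia).
    apply (adapted_rep_nonneg a b d n N w x c J z s H); auto.
    + apply deriv_chain_minus; [apply (deriv_chain_le a b k); auto; lia|apply poly_chain].
    + intros t Ht. unfold H, Q. rewrite iter_pD_pI, Rmult_comm. apply HPs; auto.
Qed.

(** * The three Abel representations *)

Lemma abel_rep_weights a b n w x : abel_rep a b 0 n n w x w (fun m t => t = x m).
Proof.
  intros H _. exists (fun m => H 0%nat (x m)). split; [reflexivity|].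
  intros m _. exists (x m), 1. repeat split; lra.
Qed.

Lemma abel_rep_partial_sums a b n w x : (1 <= n)%nat -> strict_decr x 1 n ->
  (forall i, (1 <= i <= n)%nat -> Icc a b (x i)) -> sum1n w n = 0 ->
  abel_rep a b 1 n (n - 1) w x (fun m => sum1n w m) (fun m t => x (S m) < t < x m).
Proof.
  intros Hn Hx Hxi HS H HH. destruct n as [|N]; [lia|]. replace (S N - 1)%nat with N by lia.
  exists (fun m => H 0%nat (x m) - H 0%nat (x (S m))). split.
  - rewrite summation_by_parts, HS. ring.
  - intros m Hm. assert (x (S m) < x m) by (apply Hx; lia).
    pose proof (Hxi m ltac:(lia)); pose proof (Hxi (S m) ltac:(lia)). unfold Icc in *.
    destruct (MVT_Icc a b (H 0%nat) (H 1%nat) (x (S m)) (x m)) as [xi [Hxi' E]]; try lra.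
    { intros y Hy. apply HH; auto. }
    exists xi, (x m - x (S m)). repeat split; lra.
Qed.

Definition divided_difference (h : R -> R) (p q : R) : R := (h p - h q) / (p - q).

Lemma second_difference_mvt a b H p q r : a <= r -> r < q -> q < p -> p <= b ->
  deriv_chain a b 2 H ->
  exists eta e, r < eta < p /\ 0 < e /\
    divided_difference (H 0%nat) p q - divided_difference (H 0%nat) q r = H 2%nat eta * e.
Proof.
  intros Hr Hrq Hqp Hp HH.
  assert (D0 : forall y, Icc a b y -> D_in (H 0%nat) (H 1%nat) (Icc a b) y)
    by (intros; apply HH; auto).
  assert (D1 : forall y, Icc a b y -> D_in (H 1%nat) (H 2%nat) (Icc a b) y)
    by (intros; apply HH; auto).
  destruct (MVT_Icc a b _ _ q p ltac:(lra) Hqp Hp D0) as [x1 [Hx1 E1]].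
  destruct (MVT_Icc a b _ _ r q Hr Hrq ltac:(lra) D0) as [x2 [Hx2 E2]].
  destruct (MVT_Icc a b _ _ x2 x1 ltac:(lra) ltac:(lra) ltac:(lra) D1) as [eta [Heta E]].
  exists eta, (x1 - x2). split; [lra|split; [lra|]].
  unfold divided_difference. rewrite E1, E2, <- E. field. lra.
Qed.

Definition Tseq (w x : nat -> R) (m : nat) : R :=
  sum1n (fun i => w i * x i) m - sum1n w m * x m.

Lemma Tseq_1 w x : Tseq w x 1 = 0.
Proof. unfold Tseq. simpl. ring. Qed.

Lemma Tseq_step w x m : Tseq w x (S m) - Tseq w x m = sum1n w m * (x m - x (S m)).
Proof. unfold Tseq. rewrite !sum1n_S. ring. Qed.

Lemma abel_rep_second a b n w x : (2 <= n)%nat -> strict_decr x 1 n ->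
  (forall i, (1 <= i <= n)%nat -> Icc a b (x i)) -> sum1n w n = 0 -> Tseq w x n = 0 ->
  abel_rep a b 2 n (n - 2) w x (fun m => Tseq w x (S m)) (fun m t => x (S (S m)) < t < x m).
Proof.
  intros Hn Hx Hxi HS HT H HH. destruct n as [|[|N]]; [lia|lia|].
  replace (S (S N) - 2)%nat with N by lia.
  set (dd := fun m => divided_difference (H 0%nat) (x m) (x (S m))).
  exists (fun m => dd m - dd (S m)). split.
  - rewrite summation_by_parts, HS, Rmult_0_l, Rplus_0_r.
    rewrite (sum1n_ext _ (fun m => (Tseq w x (S m) - Tseq w x m) * dd m)).
    2: { intros m Hm. rewrite Tseq_step. unfold dd, divided_difference. field.
         assert (x (S m) < x m) by (apply Hx; lia). lra. }
    rewrite summation_by_parts, sum1n_telescope, HT, Tseq_1.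
    rewrite Rminus_0_r, Rmult_0_l, Rplus_0_r. apply sum1n_ext.
    intros m _. rewrite sum1n_telescope, Tseq_1. ring.
  - intros m Hm. assert (x (S m) < x m) by (apply Hx; lia).
    assert (x (S (S m)) < x (S m)) by (apply Hx; lia).
    pose proof (Hxi m ltac:(lia)); pose proof (Hxi (S (S m)) ltac:(lia)). unfold Icc in *.
    apply second_difference_mvt with (a := a) (b := b); auto; lra.
Qed.

Section StrictNodes.

Variables (a b : R) (n k : nat) (x w : nat -> R) (F : nat -> R -> R).
Hypothesis Hn : (2 <= n)%nat.
Hypothesis Hx : strict_decr x 1 n.
Hypothesis Hxi : forall i, (1 <= i <= n)%nat -> Icc a b (x i).
Hypothesis Hw1 : w 1%nat > 0.
Hypothesis Hk : (1 <= k)%nat.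
Hypothesis Hm : moments_vanish w x n k.
Hypothesis HF : deriv_chain a b k F.
Hypothesis HFk : forall t, Icc a b t -> F k t >= 0.

Lemma total_weight_zero : sum1n w n = 0.
Proof. rewrite <- (Hm 0%nat) by lia. apply sum1n_ext. intros; simpl; ring. Qed.

Lemma block_start_nodes c N s p : sign_blocks c N s p -> (N <= n)%nat ->
  strict_decr (fun l => x (p l)) 1 s /\ (forall l, (1 <= l <= s)%nat -> Icc a b (x (p l))).
Proof.
  intros B HN. pose proof (blocks_range c N s p B) as Hr. split.
  - intros l H1 H2. pose proof (Hr l ltac:(lia)). pose proof (Hr (S l) ltac:(lia)).
    apply (strict_decr_lt x 1 n); auto; try lia. apply (blocks_incr _ _ _ _ B). lia.
  - intros l Hl. apply Hxi. pose proof (Hr l ltac:(lia)). lia.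
Qed.

(* Condition (1): the nodes are the midpoints of the gaps between sign blocks of w. *)
Lemma strict_case_weights : at_most_sign_changes w n (Z.of_nat k) ->
  sum1n (fun i => w i * F 0%nat (x i)) n >= 0.
Proof.
  intros Hsc.
  destruct (sign_blocks_bounded w n (Z.of_nat k)) as [s [p [Hs B]]]; auto; [lia|].
  pose proof (blocks_range w n s p B) as Hr.
  pose proof (blocks_start_ge2 w n s p B) as H2.
  set (z := fun l => (x (p l - 1)%nat + x (p l)) / 2).
  assert (Hgap : forall l, (1 <= l <= s)%nat -> x (p l) < z l < x (p l - 1)%nat).
  { intros l Hl. assert (x (S (p l - 1)) < x (p l - 1)%nat)
      by (pose proof (Hr l ltac:(lia)); pose proof (H2 l ltac:(lia)); apply Hx; lia).
    replace (S (p l - 1)) with (p l) in * by (pose proof (H2 l ltac:(lia)); lia).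
    unfold z. lra. }
  assert (Hprev : forall l, (1 <= l <= s)%nat -> forall m, (m < p l)%nat -> (1 <= m)%nat ->
            x (p l - 1)%nat <= x m).
  { intros l Hl m Hml Hm1. pose proof (Hr l ltac:(lia)).
    apply (strict_decr_le x 1 n); auto; lia. }
  assert (Hz : strict_decr z 1 s).
  { intros l H1 H3. pose proof (Hgap l ltac:(lia)). pose proof (Hgap (S l) ltac:(lia)).
    pose proof (Hprev (S l) ltac:(lia) (p l) ltac:(apply (blocks_incr _ _ _ _ B); lia)
                  ltac:(pose proof (Hr l ltac:(lia)); lia)).
    lra. }
  apply (adapted_sum_nonneg a b n k 0 n w x w (fun m t => t = x m) z s F);
    auto using abel_rep_weights; try lia.
  - intros m t Hm' ->. auto.
  - intros l Hl. pose proof (Hr l ltac:(lia)). pose proof (H2 l ltac:(lia)).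
    pose proof (Hxi (p l) ltac:(lia)). pose proof (Hxi (p l - 1)%nat ltac:(lia)).
    unfold Icc, z in *. lra.
  - apply (blocks_adapted w n s p z _ B Hz). intros j m t Hj Hjm _ ->.
    pose proof (blocks_member_range _ _ _ _ B j m Hj Hjm). split; intros.
    + pose proof (Hgap j ltac:(lia)). pose proof (Hr j ltac:(lia)).
      assert (x m <= x (p j)) by (apply (strict_decr_le x 1 n); auto; lia). lra.
    + pose proof (Hgap (S j) ltac:(lia)).
      pose proof (Hprev (S j) ltac:(lia) m ltac:(lia) ltac:(pose proof (Hr j ltac:(lia)); lia)).
      lra.
Qed.

(* Condition (2): the nodes are the starts of the sign blocks of the partial sums. *)
Lemma strict_case_partial_sums :
  at_most_sign_changes (fun m => sum1n w m) n (Z.of_nat k - 1) ->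
  sum1n (fun i => w i * F 0%nat (x i)) n >= 0.
Proof.
  intros Hsc.
  destruct (sign_blocks_bounded (fun m => sum1n w m) (n - 1) (Z.of_nat k - 1))
    as [s [p [Hs B]]]; [lia|simpl; lra|apply (sign_changes_prefix _ _ n); auto; lia|].
  destruct (block_start_nodes _ _ _ _ B) as [Hz Hzi]; [lia|].
  pose proof (blocks_range _ _ _ _ B) as Hr.
  apply (adapted_sum_nonneg a b n k 1 (n - 1) w x (fun m => sum1n w m)
           (fun m t => x (S m) < t < x m) (fun l => x (p l)) s F); auto; try lia.
  - simpl. lra.
  - apply abel_rep_partial_sums; auto; [lia|apply total_weight_zero].
  - intros m t Hm' Ht. pose proof (Hxi m ltac:(lia)). pose proof (Hxi (S m) ltac:(lia)).
    unfold Icc in *. lra.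
  - apply (blocks_adapted _ _ _ _ _ _ B Hz). intros j m t Hj Hjm _ Ht.
    pose proof (blocks_member_range _ _ _ _ B j m Hj Hjm). split; intros.
    + pose proof (Hr j ltac:(lia)).
      assert (x m <= x (p j)) by (apply (strict_decr_le x 1 n); auto; lia). lra.
    + pose proof (Hr (S j) ltac:(lia)).
      assert (x (p (S j)) <= x (S m)) by (apply (strict_decr_le x 1 n); auto; lia). lra.
Qed.

(* Condition (3) without crossings (T_m T_{m+1} >= 0): the nodes are the starts of the
   sign blocks of T_{m+1}; the term before each block vanishes. *)
Lemma strict_case_second :
  (forall m, (1 <= m < n)%nat -> Tseq w x m * Tseq w x (S m) >= 0) ->
  at_most_sign_changes (Tseq w x) n (Z.of_nat k - 2) ->
  sum1n (fun i => w i * F 0%nat (x i)) n >= 0.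
Proof.
  intros Hno Hsc.
  assert (Hk2 : (2 <= k)%nat) by (pose proof (sign_changes_bound_nonneg _ n _ ltac:(lia) Hsc); lia).
  assert (HS := total_weight_zero).
  assert (HT : Tseq w x n = 0).
  { unfold Tseq. rewrite HS, (sum1n_ext _ (fun i => w i * x i ^ 1)), Hm by (intros; simpl; ring || lia).
    ring. }
  assert (HT2 : Tseq w x 2 > 0).
  { pose proof (Tseq_step w x 1). rewrite Tseq_1 in H. simpl in H.
    assert (x 2%nat < x 1%nat) by (apply Hx; lia). nra. }
  assert (Hn3 : (3 <= n)%nat) by (destruct (Nat.eq_dec n 2) as [E|]; [rewrite E in HT; lra|lia]).
  set (c := fun m => Tseq w x (S m)).
  assert (Hsc' : at_most_sign_changes c (n - 2) (Z.of_nat k - 2)).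
  { apply (sign_changes_transfer (Tseq w x) c n (n - 2) S); [lia| |intros; lia|exact Hsc].
    intros i Hi Hnz. split; [lia|]. unfold c in *. nra. }
  destruct (sign_blocks_bounded c (n - 2) (Z.of_nat k - 2)) as [s [p [Hs B]]]; auto; [lia|].
  destruct (block_start_nodes _ _ _ _ B) as [Hz Hzi]; [lia|].
  pose proof (blocks_range _ _ _ _ B) as Hr.
  assert (Hzero := blocks_zero_before c (n - 2) s p B
                     (fun m Hm' => Hno (S m) ltac:(lia))).
  apply (adapted_sum_nonneg a b n k 2 (n - 2) w x c
           (fun m t => x (S (S m)) < t < x m) (fun l => x (p l)) s F); auto; try lia.
  - apply abel_rep_second; auto.
  - intros m t Hm' Ht. pose proof (Hxi m ltac:(lia)). pose proof (Hxi (S (S m)) ltac:(lia)).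
    unfold Icc in *. lra.
  - apply (blocks_adapted _ _ _ _ _ _ B Hz). intros j m t Hj Hjm Hc Ht.
    pose proof (blocks_member_range _ _ _ _ B j m Hj Hjm). split; intros.
    + pose proof (Hr j ltac:(lia)).
      assert (x m <= x (p j)) by (apply (strict_decr_le x 1 n); auto; lia). lra.
    + (* m is not the last index p_{j+1} - 1 of its block, where c vanishes *)
      assert (m <> (p (S j) - 1)%nat) by (intro E; apply Hc; rewrite E; apply Hzero; lia).
      pose proof (Hr (S j) ltac:(lia)).
      assert (x (p (S j)) <= x (S (S m))) by (apply (strict_decr_le x 1 n); auto; lia). lra.
Qed.

End StrictNodes.

Definition del (q : nat) (c : nat -> R) : nat -> R :=
  fun i => if Nat.ltb i q then c i else c (S i).

Definition insert_at (q : nat) (v : R) (c : nat -> R) : nat -> R :=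
  fun i => if Nat.ltb i q then c i else if Nat.eqb i q then v else c (i - 1)%nat.

Lemma del_insert_at q v c i : del q (insert_at q v c) i = c i.
Proof.
  unfold del, insert_at. destruct (Nat.ltb_spec i q).
  - destruct (Nat.ltb_spec i q); [auto|lia].
  - destruct (Nat.ltb_spec (S i) q), (Nat.eqb_spec (S i) q); try lia. f_equal. lia.
Qed.

Lemma sum_del c q : forall n, (1 <= q <= n)%nat ->
  sum1n c n = sum1n (del q c) (n - 1) + c q.
Proof.
  induction n as [|n IH]; intros Hq; [lia|].
  destruct (Nat.eq_dec q (S n)) as [->|].
  - replace (S n - 1)%nat with n by lia. rewrite sum1n_S. f_equal.
    apply sum1n_ext. intros i Hi. unfold del. destruct (Nat.ltb_spec i (S n)); auto; lia.
  - rewrite sum1n_S, IH by lia. replace (S n - 1)%nat with (S (n - 1)) by lia. rewrite sum1n_S.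
    assert (E : del q c (S (n - 1)) = c (S n)).
    { unfold del. destruct (Nat.ltb_spec (S (n - 1)) q); try lia. f_equal. lia. }
    rewrite E. ring.
Qed.

Lemma del_zero_weight (x' w' x w : nat -> R) q N : (1 <= q <= S N)%nat -> w' q = 0 ->
  (forall i, x i = del q x' i) -> (forall i, w i = del q w' i) ->
  (forall h : R -> R,
     sum1n (fun i => w i * h (x i)) N = sum1n (fun i => w' i * h (x' i)) (S N)) /\
  (forall m, sum1n w m = del q (fun m => sum1n w' m) m) /\
  (forall m, Tseq w x m = del q (Tseq w' x') m).
Proof.
  intros Hq Hw0 Hx Hw.
  assert (Gen : forall g g' : nat -> R, g' q = 0 -> (forall i, g i = del q g' i) ->
      forall m, sum1n g m = del q (fun m => sum1n g' m) m).
  { intros g g' Hg0 Hg m. unfold del. destruct (Nat.ltb_spec m q).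
    - apply sum1n_ext. intros i Hi. rewrite Hg. unfold del.
      destruct (Nat.ltb_spec i q); auto; lia.
    - rewrite (sum_del g' q (S m)), Hg0, Rplus_0_r by lia.
      replace (S m - 1)%nat with m by lia. apply sum1n_ext. intros i Hi. apply Hg. }
  split; [|split].
  - intro h. rewrite (sum_del (fun i => w' i * h (x' i)) q (S N)), Hw0, Rmult_0_l, Rplus_0_r
      by lia.
    replace (S N - 1)%nat with N by lia. apply sum1n_ext. intros i Hi. rewrite Hx, Hw.
    unfold del. destruct (Nat.ltb_spec i q); auto.
  - apply Gen; auto.
  - intro m. unfold Tseq.
    rewrite (Gen (fun i => w i * x i) (fun i => w' i * x' i)).
    2: rewrite Hw0; ring.
    2: { intro i. rewrite Hx, Hw. unfold del. destruct (Nat.ltb_spec i q); auto. }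
    rewrite (Gen w w' Hw0 Hw), Hx. unfold del. destruct (Nat.ltb_spec m q); auto.
Qed.

Lemma sign_changes_del c q N K : (1 <= N)%nat ->
  at_most_sign_changes c (S N) K -> at_most_sign_changes (del q c) N K.
Proof.
  intros HN. apply sign_changes_transfer with (phi := fun i => if Nat.ltb i q then i else S i);
    [lia| |].
  - intros i Hi Hnz. unfold del in *.
    destruct (Nat.ltb_spec i q); (split; [lia|]); nra.
  - intros i j Hi Hij Hj _. destruct (Nat.ltb_spec i q), (Nat.ltb_spec j q); lia.
Qed.

Lemma sign_changes_undel_zero c q N K : (1 <= N)%nat -> (1 <= q <= S N)%nat -> c q = 0 ->
  at_most_sign_changes (del q c) N K -> at_most_sign_changes c (S N) K.
Proof.
  intros HN HqN Hq.
  apply sign_changes_transfer with (phi := fun i => if Nat.ltb i q then i else (i - 1)%nat);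
    [lia| |].
  - intros i Hi Hnz. unfold del. destruct (Nat.ltb_spec i q).
    + destruct (Nat.ltb_spec i q); [|lia]. split; [lia|nra].
    + assert (i <> q) by (intro E; subst; auto).
      destruct (Nat.ltb_spec (i - 1) q); [lia|].
      replace (S (i - 1)) with i by lia. split; [lia|nra].
  - intros i j Hi Hij Hj Hneg.
    assert (i <> q) by (intro E; subst; rewrite Hq in Hneg; lra).
    assert (j <> q) by (intro E; subst; rewrite Hq in Hneg; lra).
    destruct (Nat.ltb_spec i q), (Nat.ltb_spec j q); lia.
Qed.

Lemma sign_changes_copy_next (c c' : nat -> R) i N K : (1 <= i)%nat -> (i < N)%nat ->
  (forall j, j <> i -> c' j = c j) -> c' i = c (S i) ->
  at_most_sign_changes c N K -> at_most_sign_changes c' N K.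
Proof.
  intros Hi HiN H1 H2.
  apply sign_changes_transfer with (phi := fun j => if Nat.eqb j i then S i else j); [lia| |].
  - intros j Hj Hnz. destruct (Nat.eqb_spec j i) as [->|].
    + split; [lia|]. rewrite <- H2. nra.
    + split; [lia|]. rewrite <- (H1 j) by auto. nra.
  - intros j1 j2 Hj1 H12 Hj2 Hneg.
    destruct (Nat.eqb_spec j1 i), (Nat.eqb_spec j2 i); try lia.
    subst j1. destruct (Nat.eq_dec j2 (S i)); [|lia]. subst j2.
    rewrite H2, H1 in Hneg by lia. nra.
Qed.

Lemma sign_changes_merge (c c' : nat -> R) i N K : (1 <= i)%nat -> (i < N)%nat ->
  (forall j, j <> i -> j <> S i -> c' j = c j) -> c' i = c i + c (S i) -> c' (S i) = 0 ->
  at_most_sign_changes c N K -> at_most_sign_changes c' N K.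
Proof.
  intros Hi HiN H1 H2 H3.
  (* the merged entry keeps the sign of one of the two merged entries *)
  apply sign_changes_transfer with
    (phi := fun j => if Nat.eqb j i then (if Rlt_dec 0 (c i * c' i) then i else S i) else j);
    [lia| |].
  - intros j Hj Hnz. destruct (Nat.eqb_spec j i) as [->|].
    + destruct (Rlt_dec 0 (c i * c' i)); (split; [lia|]); [lra|]. rewrite H2 in *. nra.
    + destruct (Nat.eq_dec j (S i)) as [->|]; [contradiction|].
      split; [lia|]. rewrite <- (H1 j) by auto. nra.
  - intros j1 j2 Hj1 H12 Hj2 Hneg.
    assert (j2 <> S i) by (intro E; subst; rewrite H3 in Hneg; lra).
    assert (j1 <> S i) by (intro E; subst; rewrite H3 in Hneg; lra).
    destruct (Nat.eqb_spec j1 i), (Nat.eqb_spec j2 i); try lia;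
      destruct (Rlt_dec 0 (c i * c' i)); lia.
Qed.

Definition crossing_at (c : nat -> R) (m : nat) : nat :=
  if Nat.leb 1 m then (if Rlt_dec (c m * c (S m)) 0 then 1%nat else 0%nat) else 0%nat.

Fixpoint crossings (c : nat -> R) (N : nat) : nat :=
  match N with O => O | S N' => (crossings c N' + crossing_at c N')%nat end.

Lemma no_crossings c : forall N, crossings c N = 0%nat ->
  forall m, (1 <= m)%nat -> (S m <= N)%nat -> c m * c (S m) >= 0.
Proof.
  induction N as [|N IH]; intros H m H1 H2; [lia|]. simpl in H.
  destruct (Nat.eq_dec m N) as [->|]; [|apply IH; auto; lia].
  unfold crossing_at in H. destruct (Nat.leb_spec 1 N); [|lia].
  destruct (Rlt_dec (c N * c (S N)) 0); [lia|lra].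
Qed.

Lemma crossings_insert_zero c p n : (1 <= p)%nat -> (S p <= n)%nat ->
  c p * c (S p) < 0 -> (crossings (insert_at (S p) 0 c) (S n) + 1 = crossings c n)%nat.
Proof.
  intros Hp Hpn Hx. set (c' := insert_at (S p) 0 c).
  assert (Hlo : forall i, (i <= p)%nat -> c' i = c i).
  { intros i Hi. unfold c', insert_at. destruct (Nat.ltb_spec i (S p)); [auto|lia]. }
  assert (Hhi : forall i, (S p <= i)%nat -> c' (S i) = c i).
  { intros i Hi. unfold c', insert_at. destruct (Nat.ltb_spec (S i) (S p)); [lia|].
    destruct (Nat.eqb_spec (S i) (S p)); [lia|]. f_equal. lia. }
  assert (H0 : c' (S p) = 0).
  { unfold c', insert_at. rewrite Nat.eqb_refl. destruct (Nat.ltb_spec (S p) (S p)); [lia|auto]. }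
  assert (A : forall N, (N <= p)%nat -> crossings c' N = crossings c N).
  { induction N as [|N IH]; intros HN; simpl; auto. rewrite IH by lia. f_equal.
    unfold crossing_at. rewrite !Hlo by lia. auto. }
  assert (B : forall N, (S p <= N)%nat -> (crossings c' (S N) + 1 = crossings c N)%nat).
  { induction N as [|N IH]; intros HN; [lia|]. destruct (Nat.eq_dec N p) as [->|].
    - simpl crossings. rewrite A by lia. unfold crossing_at. rewrite H0, Hlo by lia.
      destruct (Nat.leb_spec 1 p), (Nat.leb_spec 1 (S p)); try lia.
      rewrite Rmult_0_r, Rmult_0_l. destruct (Rlt_dec 0 0); [lra|].
      destruct (Rlt_dec (c p * c (S p)) 0); [lia|lra].
    - assert (E : crossing_at c' (S N) = crossing_at c N).
      { unfold crossing_at. rewrite !Hhi by lia.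
        destruct (Nat.leb_spec 1 (S N)), (Nat.leb_spec 1 N); try lia. }
      specialize (IH ltac:(lia)).
      change (crossings c' (S (S N))) with (crossings c' (S N) + crossing_at c' (S N))%nat.
      change (crossings c (S N)) with (crossings c N + crossing_at c N)%nat. lia. }
  apply B; auto.
Qed.

(** * Removing the crossings of T by inserting nodes of weight zero *)

Lemma insert_at_del q v c : c q = v -> forall i, insert_at q v (del q c) i = c i.
Proof.
  intros Hq i. unfold insert_at, del.
  destruct (Nat.ltb_spec i q); [destruct (Nat.ltb_spec i q); [auto|lia]|].
  destruct (Nat.eqb_spec i q) as [->|]; [auto|].
  destruct (Nat.ltb_spec (i - 1) q); [lia|]. f_equal. lia.
Qed.

Lemma crossings_ext c c' N : (forall i, c i = c' i) -> crossings c N = crossings c' N.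
Proof.
  intros E. induction N as [|N IH]; simpl; auto. rewrite IH. unfold crossing_at. rewrite !E. auto.
Qed.

Lemma crossing_point (S W u v : R) : v < u -> (W - S * u) * (W - S * v) < 0 ->
  S <> 0 /\ v < W / S < u.
Proof.
  intros Huv H.
  assert (HS : S <> 0) by (intro E; subst; nra).
  split; [auto|]. set (t := W / S). replace W with (S * t) in H by (unfold t; field; auto).
  replace ((S * t - S * u) * (S * t - S * v)) with ((S * S) * ((t - u) * (t - v))) in H by ring.
  assert (0 < S * S) by nra.
  assert ((t - u) * (t - v) < 0) by nra. nra.
Qed.

Lemma insert_at_strict_decr x n p t : (1 <= p)%nat -> (S p <= n)%nat ->
  strict_decr x 1 n -> x (S p) < t < x p -> strict_decr (insert_at (S p) t x) 1 (S n).
Proof.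
  intros Hp1 Hp2 Hx Ht l H1 H2. unfold insert_at.
  destruct (Nat.ltb_spec (S l) (S p)), (Nat.ltb_spec l (S p)); try lia.
  - apply Hx; lia.
  - destruct (Nat.eqb_spec (S l) (S p)); [|lia].
    assert (l = p) by lia. subst l. lra.
  - destruct (Nat.eqb_spec (S l) (S p)), (Nat.eqb_spec l (S p)); try lia.
    + subst l. replace (S (S p) - 1)%nat with (S p) by lia. lra.
    + replace (S l - 1)%nat with l by lia.
      pose proof (Hx (l - 1)%nat ltac:(lia) ltac:(lia)) as Hl.
      replace (S (l - 1)) with l in Hl by lia. exact Hl.
Qed.

Lemma insert_crossing_node a b n x w p : (1 <= p)%nat -> (S p <= n)%nat ->
  strict_decr x 1 n -> (forall i, (1 <= i <= n)%nat -> Icc a b (x i)) ->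
  Tseq w x p * Tseq w x (S p) < 0 ->
  exists x' w', strict_decr x' 1 (S n) /\ (forall i, (1 <= i <= S n)%nat -> Icc a b (x' i)) /\
    w' 1%nat = w 1%nat /\
    (forall h : R -> R,
       sum1n (fun i => w' i * h (x' i)) (S n) = sum1n (fun i => w i * h (x i)) n) /\
    (forall i, Tseq w' x' i = insert_at (S p) 0 (Tseq w x) i).
Proof.
  intros Hp1 Hp2 Hx Hxi Hpx.
  set (Sp := sum1n w p). set (Wp := sum1n (fun i => w i * x i) p).
  assert (Hd : x (S p) < x p) by (apply Hx; lia).
  assert (HTp : Tseq w x (S p) = Wp - Sp * x (S p))
    by (unfold Tseq, Wp, Sp; rewrite !sum1n_S; ring).
  destruct (crossing_point Sp Wp (x p) (x (S p)) Hd) as [HSp Ht].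
  { rewrite <- HTp. exact Hpx. }
  set (t := Wp / Sp) in Ht.
  exists (insert_at (S p) t x), (insert_at (S p) 0 w).
  assert (Hdel : forall c v i, c i = del (S p) (insert_at (S p) v c) i)
    by (intros; rewrite del_insert_at; auto).
  assert (Hw0 : insert_at (S p) 0 w (S p) = 0)
    by (unfold insert_at; rewrite Nat.eqb_refl; destruct (Nat.ltb_spec (S p) (S p)); [lia|auto]).
  destruct (del_zero_weight (insert_at (S p) t x) (insert_at (S p) 0 w) x w (S p) n
              ltac:(lia) Hw0 (Hdel x t) (Hdel w 0)) as [Hsum [_ HT]].
  assert (Hlo : forall c v i, (i <= p)%nat -> insert_at (S p) v c i = c i)
    by (intros; unfold insert_at; destruct (Nat.ltb_spec i (S p)); [auto|lia]).
  split; [apply insert_at_strict_decr; auto|split; [|split; [|split]]].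
  - intros i Hi. unfold insert_at. destruct (Nat.ltb_spec i (S p)); [apply Hxi; lia|].
    destruct (Nat.eqb_spec i (S p)); [|apply Hxi; lia].
    pose proof (Hxi p ltac:(lia)). pose proof (Hxi (S p) ltac:(lia)). unfold Icc in *. lra.
  - apply Hlo. lia.
  - intro h. symmetry. apply Hsum.
  -
    intro i. rewrite <- (insert_at_del (S p) 0 (Tseq _ _)).
    + unfold insert_at. rewrite <- !HT. reflexivity.
    + unfold Tseq. rewrite !sum1n_S, Hw0.
      rewrite (sum1n_ext (fun i => insert_at (S p) 0 w i * insert_at (S p) t x i)
                 (fun i => w i * x i)) by (intros; rewrite !Hlo by lia; auto).
      rewrite (sum1n_ext (insert_at (S p) 0 w) w) by (intros; apply Hlo; lia).
      fold Sp Wp. unfold insert_at. rewrite Nat.eqb_refl.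
      destruct (Nat.ltb_spec (S p) (S p)); [lia|]. unfold t. field. auto.
Qed.

(** * Merging equal nodes *)

Definition merge_next (i : nat) (w : nat -> R) : nat -> R :=
  fun j => if Nat.eqb j i then w i + w (S i) else if Nat.eqb j (S i) then 0 else w j.

Lemma merge_next_at i w : merge_next i w i = w i + w (S i).
Proof. unfold merge_next. rewrite Nat.eqb_refl. auto. Qed.

Lemma merge_next_after i w : merge_next i w (S i) = 0.
Proof. unfold merge_next. destruct (Nat.eqb_spec (S i) i); [lia|]. now rewrite Nat.eqb_refl. Qed.

Lemma merge_next_other i w j : j <> i -> j <> S i -> merge_next i w j = w j.
Proof.
  intros H1 H2. unfold merge_next.
  destruct (Nat.eqb_spec j i), (Nat.eqb_spec j (S i)); auto; lia.
Qed.

Lemma sum1n_pair_update (g g' : nat -> R) i : (1 <= i)%nat ->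
  (forall j, j <> i -> j <> S i -> g' j = g j) -> g' i + g' (S i) = g i + g (S i) ->
  forall N, sum1n g' N = sum1n g N + (if Nat.eqb N i then g' i - g i else 0).
Proof.
  intros Hi H1 H2. induction N as [|N IH].
  - destruct (Nat.eqb_spec 0 i); [lia|]. simpl. ring.
  - rewrite !sum1n_S, IH.
    destruct (Nat.eqb_spec N i), (Nat.eqb_spec (S N) i); try lia.
    + subst N. lra.
    + subst i. ring.
    + rewrite H1 by lia. ring.
Qed.

Lemma merge_next_partial_sums i w m : (1 <= i)%nat ->
  sum1n (merge_next i w) m = if Nat.eqb m i then sum1n w (S i) else sum1n w m.
Proof.
  intros Hi. rewrite (sum1n_pair_update w (merge_next i w) i Hi (merge_next_other i w))
    by (rewrite merge_next_at, merge_next_after; ring).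
  destruct (Nat.eqb_spec m i) as [->|]; [|ring].
  rewrite merge_next_at, sum1n_S. ring.
Qed.

Section TiedNodes.

Variables (x w : nat -> R) (i : nat).
Hypothesis Hi : (1 <= i)%nat.
Hypothesis Htie : x (S i) = x i.

Lemma merge_next_sums (h : R -> R) N : N <> i ->
  sum1n (fun j => merge_next i w j * h (x j)) N = sum1n (fun j => w j * h (x j)) N.
Proof.
  intros HN. rewrite (sum1n_pair_update (fun j => w j * h (x j))
                        (fun j => merge_next i w j * h (x j)) i Hi).
  - destruct (Nat.eqb_spec N i); [lia|ring].
  - intros j H1 H2. rewrite merge_next_other; auto.
  - rewrite merge_next_at, merge_next_after, Htie. ring.
Qed.

Lemma merge_next_Tseq m :
  Tseq (merge_next i w) x m = if Nat.eqb m i then Tseq w x (S i) else Tseq w x m.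
Proof.
  unfold Tseq. rewrite merge_next_partial_sums by auto.
  rewrite (sum1n_pair_update (fun j => w j * x j) (fun j => merge_next i w j * x j) i Hi).
  - destruct (Nat.eqb_spec m i) as [->|]; [|ring].
    rewrite merge_next_at, !sum1n_S, !Htie. ring.
  - intros j H1 H2. rewrite merge_next_other; auto.
  - rewrite merge_next_at, merge_next_after, Htie. ring.
Qed.

End TiedNodes.

Definition sign_conditions (w x : nat -> R) (n k : nat) : Prop :=
  at_most_sign_changes w n (Z.of_nat k) \/
  at_most_sign_changes (fun m => sum1n w m) n (Z.of_nat k - 1) \/
  at_most_sign_changes (Tseq w x) n (Z.of_nat k - 2).

Lemma tie_reduction a b n k x w i : (2 <= i)%nat -> (i < n)%nat -> x (S i) = x i ->
  x 1%nat > x 2%nat -> (forall j, (2 <= j < n)%nat -> x (S j) <= x j) ->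
  (forall j, (1 <= j <= n)%nat -> Icc a b (x j)) -> sign_conditions w x n k ->
  exists x' w', x' 1%nat > x' 2%nat /\ (forall j, (2 <= j < n - 1)%nat -> x' (S j) <= x' j) /\
    (forall j, (1 <= j <= n - 1)%nat -> Icc a b (x' j)) /\ w' 1%nat = w 1%nat /\
    (forall h : R -> R,
       sum1n (fun j => w' j * h (x' j)) (n - 1) = sum1n (fun j => w j * h (x j)) n) /\
    sign_conditions w' x' (n - 1) k.
Proof.
  intros Hi Hin Htie H12 Hmon Hxi Hsc.
  exists (del (S i) x), (del (S i) (merge_next i w)).
  destruct (del_zero_weight x (merge_next i w) (del (S i) x) (del (S i) (merge_next i w))
              (S i) (n - 1) ltac:(lia) (merge_next_after i w) (fun _ => eq_refl)
              (fun _ => eq_refl)) as [Hsum [HS HT]].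
  replace (S (n - 1)) with n in Hsum by lia.
  split; [|split; [|split; [|split; [|split]]]].
  - unfold del. destruct (Nat.ltb_spec 1 (S i)), (Nat.ltb_spec 2 (S i)); try lia. auto.
  - intros j Hj. unfold del. destruct (Nat.ltb_spec (S j) (S i)), (Nat.ltb_spec j (S i)); try lia.
    + apply Hmon; lia.
    + replace j with i by lia. rewrite <- Htie. apply Hmon; lia.
    + apply Hmon; lia.
  - intros j Hj. unfold del. destruct (Nat.ltb_spec j (S i)); apply Hxi; lia.
  - unfold del. destruct (Nat.ltb_spec 1 (S i)); [|lia]. apply merge_next_other; lia.
  - intro h. rewrite Hsum. apply merge_next_sums; auto; lia.
  - assert (Hn1 : (1 <= n - 1)%nat) by lia.
    replace n with (S (n - 1)) in Hsc by lia.
    destruct Hsc as [H|[H|H]]; [left|right; left|right; right].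
    + apply sign_changes_del; auto.
      apply (sign_changes_merge w _ i); auto using merge_next_at, merge_next_after; try lia.
      intros; apply merge_next_other; auto.
    + apply (sign_changes_ext (del (S i) (fun m => sum1n (merge_next i w) m))); [intro; auto|].
      apply sign_changes_del; auto.
      apply (sign_changes_copy_next (fun m => sum1n w m) _ i); try lia; auto;
        intros; rewrite merge_next_partial_sums by lia;
        [destruct (Nat.eqb_spec j i); [lia|auto]|now rewrite Nat.eqb_refl].
    + apply (sign_changes_ext (del (S i) (Tseq (merge_next i w) x))); [intro; auto|].
      apply sign_changes_del; auto.
      apply (sign_changes_copy_next (Tseq w x) _ i); try lia; auto;
        intros; rewrite merge_next_Tseq by (lia || auto);
        [destruct (Nat.eqb_spec j i); [lia|auto]|now rewrite Nat.eqb_refl].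
Qed.

Section Reductions.

Variables (a b : R) (k : nat) (F : nat -> R -> R).
Hypothesis HF : deriv_chain a b k F.
Hypothesis HFk : forall t, Icc a b t -> F k t >= 0.

Lemma strict_case_second_general : forall cnt n x w,
  (crossings (Tseq w x) n <= cnt)%nat ->
  (2 <= n)%nat -> strict_decr x 1 n -> (forall i, (1 <= i <= n)%nat -> Icc a b (x i)) ->
  w 1%nat > 0 -> (1 <= k)%nat -> moments_vanish w x n k ->
  at_most_sign_changes (Tseq w x) n (Z.of_nat k - 2) ->
  sum1n (fun i => w i * F 0%nat (x i)) n >= 0.
Proof.
  induction cnt as [|cnt IH]; intros n x w Hcr Hn Hx Hxi Hw1 Hk Hm Hsc;
    (destruct (classic (exists p, (1 <= p)%nat /\ (S p <= n)%nat /\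
                 Tseq w x p * Tseq w x (S p) < 0)) as [[p [Hp1 [Hp2 Hpx]]]|Hno];
     [|eapply strict_case_second; eauto; intros m Hm';
       apply Rnot_lt_ge; intro; apply Hno; exists m; repeat split; auto; lia]).
  - pose proof (no_crossings (Tseq w x) n ltac:(lia) p Hp1 Hp2). lra.
  - destruct (insert_crossing_node a b n x w p) as [x' [w' [Hx' [Hxi' [Hw1' [Hsum HT]]]]]];
      auto.
    rewrite <- (Hsum (F 0%nat)). apply (IH (S n) x' w'); auto; try lia.
    + rewrite (crossings_ext _ _ (S n) HT).
      pose proof (crossings_insert_zero (Tseq w x) p n Hp1 Hp2 Hpx). lia.
    + rewrite Hw1'. auto.
    + intros j Hj. rewrite (Hsum (fun y => y ^ j)). apply Hm; auto.
    + apply (sign_changes_undel_zero _ (S p)); try lia.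
      * rewrite HT. unfold insert_at. rewrite Nat.eqb_refl.
        destruct (Nat.ltb_spec (S p) (S p)); [lia|auto].
      * apply (sign_changes_ext (Tseq w x)); auto. intro i.
        rewrite <- (del_insert_at (S p) 0 (Tseq w x) i). unfold del. rewrite !HT. reflexivity.
Qed.

Lemma strict_nodes_nonneg n x w : (2 <= n)%nat -> strict_decr x 1 n ->
  (forall i, (1 <= i <= n)%nat -> Icc a b (x i)) -> w 1%nat > 0 -> (1 <= k)%nat ->
  moments_vanish w x n k -> sign_conditions w x n k ->
  sum1n (fun i => w i * F 0%nat (x i)) n >= 0.
Proof.
  intros Hn Hx Hxi Hw1 Hk Hm [H|[H|H]].
  - eapply strict_case_weights; eauto.
  - eapply strict_case_partial_sums; eauto.
  - apply (strict_case_second_general (crossings (Tseq w x) n)); auto.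
Qed.

Lemma weighted_sum_nonneg : forall n x w, (2 <= n)%nat -> x 1%nat > x 2%nat ->
  (forall i, (2 <= i < n)%nat -> x (S i) <= x i) ->
  (forall i, (1 <= i <= n)%nat -> Icc a b (x i)) -> w 1%nat > 0 -> (1 <= k)%nat ->
  moments_vanish w x n k -> sign_conditions w x n k ->
  sum1n (fun i => w i * F 0%nat (x i)) n >= 0.
Proof.
  intro n. induction n as [n IH] using (well_founded_induction lt_wf).
  intros x w Hn H12 Hmon Hxi Hw1 Hk Hm Hsc.
  destruct (classic (exists i, (2 <= i < n)%nat /\ x (S i) = x i)) as [[i [Hi Htie]]|Hno].
  - destruct (tie_reduction a b n k x w i) as [x' [w' [H12' [Hmon' [Hxi' [Hw1' [Hsum Hsc']]]]]]];
      auto; try lia.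
    rewrite <- (Hsum (F 0%nat)). apply (IH (n - 1)%nat); auto; try lia.
    + rewrite Hw1'. auto.
    + intros j Hj. rewrite (Hsum (fun y => y ^ j)). apply Hm; auto.
  - apply strict_nodes_nonneg; auto. intros l H1 H2.
    destruct (Nat.eq_dec l 1) as [->|]; [lra|].
    assert (x (S l) <= x l) by (apply Hmon; lia).
    destruct (Req_dec (x (S l)) (x l)); [exfalso; apply Hno; exists l; split; auto; lia|lra].
Qed.

End Reductions.

Theorem mainTheorem5 (a b : R) (n k : nat) (x w : nat -> R) :
  (2 <= n)%nat ->
  x 1%nat > x 2%nat ->
  (forall i, (2 <= i < n)%nat -> x (S i) <= x i) ->
  (forall i, (1 <= i <= n)%nat -> a <= x i <= b) ->
  w 1%nat > 0 ->
  (1 <= k)%nat ->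
  (forall j, (j < k)%nat -> sum1n (fun i => w i * x i ^ j) n = 0) ->
  (at_most_sign_changes w n (Z.of_nat k)
   \/ at_most_sign_changes (fun m => sum1n w m) n (Z.of_nat k - 1)
   \/ at_most_sign_changes
        (fun m => sum1n (fun i => w i * x i) m - sum1n w m * x m) n
        (Z.of_nat k - 2)) ->
  forall (f : R -> R) (F : nat -> R -> R),
    derivs_on a b k f F ->
    (forall t, a <= t <= b -> F k t >= 0) ->
    sum1n (fun i => w i * f (x i)) n >= 0.
Proof.
  intros Hn H12 Hmon Hxi Hw1 Hk Hm Hsc f F [HF0 HF] HFk.
  rewrite (sum1n_ext _ (fun i => w i * F 0%nat (x i)))
    by (intros i Hi; rewrite HF0; auto; apply Hxi; auto).
  apply (weighted_sum_nonneg a b k F HF HFk n x w); auto.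
Qed.
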